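(* Let $n\ge 0$. For a noncrossing linked partition $\pi$ of $[n+1]$, define a lattice path $\phi(\pi)$ starting at $(0,0)$ with steps $N=(0,1)$, $E=(1,0)$, $D=(1,1)$ as follows. For $i=0,1,\dots,n-1$ in turn (the path being on the vertical line $x=i$): Step 1: if $i+1$ is the minimum of a block $B$ of $\pi$ with $|B|=k$, perform $k-1$ $N$-steps (otherwise perform none); Step 2: perform one $D$-step if $i+2$ is a singly covered minimal element of $\pi$, and one $E$-step otherwise. Then $\phi(\pi)$ is a Schröder path of length $n$, and $\phi$ is a bijection from the set of noncrossing linked partitions of $[n+1]$ to the set of Schröder paths of length $n$.
   Context: Two finite sets of integers $E,F$ are nearly disjoint if for every $i\in E\cap F$ either ($i=\min(E)$, $|E|>1$, $i\ne\min(F)$) or ($i=\min(F)$, $|F|>1$, $i\ne\min(E)$). A linked partition of $[n]$ is a set of nonempty subsets (blocks) of $[n]$ with union $[n]$, any two distinct blocks nearly disjoint; it is noncrossing if there are no two distinct blocks $B,B'$ and $a,c\in B$, $b,d\in B'$ with $a<b<c<d$. In a linked partition each element lies in exactly one or exactly two blocks; it is called singly covered or doubly covered accordingly. An element $i$ is a minimal element of $\pi$ if it is the minimum of some block; it is a singly covered minimal element if in addition it is singly covered. A Schröder path of length $n$ is a lattice path from $(0,0)$ to $(n,n)$ with steps $(1,0)$, $(0,1)$, $(1,1)$ that never goes below the line $y=x$. *)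

From mathcomp Require Import all_boot.
Set Implicit Arguments. Unset Strict Implicit. Unset Printing Implicit Defensive.

(* Ground set [m] = {1,...,m} is represented by 'I_m, element j+1 <-> ordinal of value j
   (an order-preserving relabelling). *)

Section LinkedPartitions.
Variable m : nat.
Implicit Types (E F B : {set 'I_m}) (P : {set {set 'I_m}}).

Definition is_min (i : 'I_m) E : bool := (i \in E) && [forall j in E, i <= j].

Definition nearly_disjoint E F : Prop :=
  forall i, i \in E -> i \in F ->
    (is_min i E && (1 < #|E|) && ~~ is_min i F) ||
    (is_min i F && (1 < #|F|) && ~~ is_min i E).

Definition linked_partition P : Prop :=
  (forall B, B \in P -> B != set0) /\
  (forall i : 'I_m, exists2 B, B \in P & i \in B) /\
  (forall B B', B \in P -> B' \in P -> B != B' -> nearly_disjoint B B').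

Definition noncrossing P : Prop :=
  ~ exists B B' (a b c d : 'I_m),
      [/\ B \in P, B' \in P, B != B' &
       [/\ a \in B, c \in B, b \in B', d \in B' & [/\ a < b, b < c & c < d]]].

Definition nc_linked_partition P : Prop := linked_partition P /\ noncrossing P.

Definition cover_count P (i : 'I_m) : nat := #|[set B in P | i \in B]|.

Definition singly_covered P i : bool := cover_count P i == 1.

Definition minimal_elt P i : bool := [exists B in P, is_min i B].

Definition singly_covered_minimal P i : bool := minimal_elt P i && singly_covered P i.

Definition block_with_min P (k : nat) : option {set 'I_m} :=
  [pick B in P | [exists i : 'I_m, (val i == k) && is_min i B]].

Definition scm_val P (k : nat) : bool :=
  [exists i : 'I_m, (val i == k) && singly_covered_minimal P i].

End LinkedPartitions.

Inductive step := N | E | D.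

Definition xcoord (p : seq step) : nat := count (fun s => if s is N then false else true) p.
Definition ycoord (p : seq step) : nat := count (fun s => if s is E then false else true) p.

Definition schroder_path (n : nat) (p : seq step) : Prop :=
  [/\ xcoord p = n, ycoord p = n & forall k, xcoord (take k p) <= ycoord (take k p)].

(* The map phi on linked partitions of [n+1] ('I_n.+1).
   For i = 0..n-1: Step 1 uses element i+1 (ordinal value i),
   Step 2 uses element i+2 (ordinal value i+1). *)
Definition phi (n : nat) (P : {set {set 'I_n.+1}}) : seq step :=
  flatten [seq nseq (if block_with_min P i is Some B then #|B| - 1 else 0) N
                 ++ [:: if scm_val P i.+1 then D else E] | i <- iota 0 n].

(* Encode a linked partition of {0, ..., n} by its parent function: [par j = Some x] when [j]
   is a non-minimal element of the block with minimum [x]. Near disjointness says exactly that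
   every element has at most one parent, and the blocks are recovered as [x] together with its
   children. In these terms phi writes, for each [i < n], one N step per child of [i] followed by
   E if [i + 1] has a parent and D otherwise, and noncrossing says that no two parent arcs
   [x -> j], [y -> k] interleave as [x < y < j < k].
   A noncrossing parent function is read back from its path greedily: the parent of [j] is the
   largest [y < j] whose quota of N steps is not yet used up. For a Schroeder path this greedy
   assignment never gets stuck, since before each E step more N steps than E steps have been
   read, and since the path ends on the diagonal every quota is used up exactly. *)

From mathcomp Require Import all_boot zify.
Set Implicit Arguments. Unset Strict Implicit. Unset Printing Implicit Defensive.

(** * Step words made of runs *)

Definition isN (s : step) : bool := if s is N then true else false.
Definition isE (s : step) : bool := if s is E then true else false.
Definition isD (s : step) : bool := if s is D then true else false.

Lemma xcoordE q : xcoord q = count isE q + count isD q.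
Proof. by elim: q => [|[] q IH] //=; rewrite IH ?addnS. Qed.

Lemma ycoordE q : ycoord q = count isN q + count isD q.
Proof. by elim: q => [|[] q IH] //=; rewrite IH ?addnS. Qed.

Lemma iotaSr m : iota 0 m.+1 = rcons (iota 0 m) m.
Proof. by rewrite -cats1 -addn1 iotaD. Qed.

Definition runs (a : nat -> nat) (x : nat -> step) (s : seq nat) : seq step :=
  flatten [seq nseq (a i) N ++ [:: x i] | i <- s].

Section Runs.
Implicit Types (a : nat -> nat) (x : nat -> step) (s : seq nat).

Lemma runs_cons a x i s : runs a x (i :: s) = nseq (a i) N ++ x i :: runs a x s.
Proof. by rewrite /runs /= -catA. Qed.

Lemma runs_cat a x s1 s2 : runs a x (s1 ++ s2) = runs a x s1 ++ runs a x s2.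
Proof. by rewrite /runs map_cat flatten_cat. Qed.

Lemma runs_rcons a x s i : runs a x (rcons s i) = runs a x s ++ nseq (a i) N ++ [:: x i].
Proof. by rewrite -cats1 runs_cat runs_cons. Qed.

Lemma eq_in_runs a a' x x' s :
  {in s, a =1 a'} -> {in s, x =1 x'} -> runs a x s = runs a' x' s.
Proof.
by move=> ea ex; rewrite /runs; congr flatten; apply/eq_in_map => i si; rewrite ea ?ex.
Qed.

Lemma count_runs (p : pred step) a x s :
  p N = false -> count p (runs a x s) = count (p \o x) s.
Proof.
by move=> pN; elim: s => //= i s IH; rewrite runs_cons count_cat count_nseq pN /= IH.
Qed.

Definition above_diag (h : nat) (q : seq step) :=
  forall k, count isE (take k q) <= h + count isN (take k q).

Lemma above_diag_cat h q1 q2 : above_diag h q1 ->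
    count isE q1 <= h + count isN q1 -> above_diag (h + count isN q1 - count isE q1) q2 ->
  above_diag h (q1 ++ q2).
Proof.
move=> q1h le_q1 q2h k; rewrite take_cat; case: ifP => _; first exact: q1h.
by rewrite !count_cat; have := q2h (k - size q1); lia.
Qed.

Lemma above_diag_run h r u : (isE u -> 0 < h + r) -> above_diag h (nseq r N ++ [:: u]).
Proof.
move=> uE k; rewrite take_cat size_nseq; case: ltnP => kr.
  by rewrite take_nseq ?(ltnW kr) // count_nseq /=; lia.
rewrite !count_cat !count_nseq /=; case: (k - r) => [|k'] /=; first lia.
by case: u uE => /= uE; [lia | have := uE isT; lia | lia].
Qed.

Section Markers.
Variable x : nat -> step.
Hypothesis xNN : forall i, isN (x i) = false.

Lemma count_N_runs a m : count isN (runs a x (iota 0 m)) = \sum_(i < m) a i.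
Proof.
elim: m => [|m IH]; first by rewrite big_ord0.
by rewrite iotaSr runs_rcons !count_cat count_nseq /= xNN IH big_ord_recr /= mul1n !addn0.
Qed.

Lemma runs_inj a a' x' s : (forall i, isN (x' i) = false) ->
  runs a x s = runs a' x' s -> {in s, a =1 a'} /\ {in s, x =1 x'}.
Proof.
move=> x'NN; elim: s => [|i s IH] //; rewrite !runs_cons.
suff eq_run r r' u u' t t' : isN u = false -> isN u' = false ->
    nseq r N ++ u :: t = nseq r' N ++ u' :: t' -> [/\ r = r', u = u' & t = t'].
  case/eq_run=> // ei exi /IH [ea ex].
  by split=> j; rewrite inE => /predU1P [->|js] //; [apply: ea | apply: ex].
move=> uN u'N; elim: r r' => [|r IHr] [|r'] /=; try by case=> *; subst.
by case=> /IHr [-> -> ->].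
Qed.

Lemma count_isE_isD s : count (isE \o x) s + count (isD \o x) s = size s.
Proof. by elim: s => //= i s <-; move: (xNN i); case: (x i) => //= _; rewrite addnS. Qed.

Lemma runs_above_diag a len :
    (forall m, m < len -> count (isE \o x) (iota 0 m.+1) <= \sum_(i < m.+1) a i) ->
  above_diag 0 (runs a x (iota 0 len)).
Proof.
move=> ballot; elim: len ballot => [|m IH] ballot k; first by case: k.
have IHm : above_diag 0 (runs a x (iota 0 m)) by apply: IH => i /ltnW; apply: ballot.
have le_EN := IHm (size (runs a x (iota 0 m))); rewrite take_size in le_EN.
rewrite iotaSr runs_rcons; apply: above_diag_cat => // j; apply: above_diag_run => xmE.
have := ballot m (ltnSn m); rewrite iotaSr -cats1 count_cat big_ord_recr /= xmE.
by rewrite -count_N_runs (count_runs (p := isE)) //; lia.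
Qed.

End Markers.
End Runs.

Lemma xcoord_rcons q s : xcoord (rcons q s) = xcoord q + ~~ isN s.
Proof. by rewrite /xcoord -cats1 count_cat; case: s. Qed.

Lemma runs_decomposition q : exists a x r,
  (forall i, isN (x i) = false) /\ q = runs a x (iota 0 (xcoord q)) ++ nseq r N.
Proof.
elim/last_ind: q => [|q s [a [x [r [xNN eq_q]]]]]; first by exists (fun=> 0), (fun=> E), 0.
rewrite xcoord_rcons; set m := xcoord q; case sN: (isN s).
  exists a, x, r.+1; split => //; rewrite addn0 -cats1 eq_q -catA; congr (_ ++ _).
  by case: s sN => // _; elim: (r) => //= k ->.
exists (fun i => if i == m then r else a i), (fun i => if i == m then s else x i), 0.
split => [i|]; first by case: eqP.
rewrite addn1 iotaSr runs_rcons eqxx cats0 -cats1 eq_q -catA; congr (_ ++ _).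
by apply: eq_in_runs => i; rewrite mem_iota => /andP [_ /ltn_eqF ->].
Qed.

Lemma schroder_runs n p : schroder_path n p -> exists a x,
  [/\ forall i, isN (x i) = false, p = runs a x (iota 0 n),
      forall m, m <= n -> count (isE \o x) (iota 0 m) <= \sum_(i < m) a i &
      \sum_(i < n) a i <= count (isE \o x) (iota 0 n)].
Proof.
case=> xp yp above; have [a [x [r [xNN eq_p]]]] := runs_decomposition p.
rewrite xp in eq_p.
have ballot m : m <= n -> count (isE \o x) (iota 0 m) <= \sum_(i < m) a i.
  move=> mn; have := above (size (runs a x (iota 0 m))).
  rewrite eq_p -(subnKC mn) iotaD runs_cat -catA take_size_cat //.
  by rewrite xcoordE ycoordE leq_add2r count_runs // count_N_runs.
have : ycoord p = xcoord p by rewrite xp yp.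
rewrite eq_p xcoordE ycoordE !count_cat !count_nseq /= count_N_runs // !count_runs //.
rewrite !mul1n !mul0n !addn0 => /addIn sum_r.
have r0 : r = 0.
  by apply/eqP; rewrite -leqn0 -(leq_add2l (\sum_(i < n) a i)) addn0 sum_r ballot.
by exists a, x; split=> //; [rewrite r0 cats0 | rewrite -sum_r leq_addr].
Qed.

Lemma count_iota_leq (p : pred nat) i j : i <= j -> count p (iota 0 i) <= count p (iota 0 j).
Proof. by move=> ij; rewrite -(subnKC ij) iotaD count_cat leq_addr. Qed.

Lemma count_iota_shift (p : pred nat) m :
  p 0 = false -> count p (iota 0 m.+1) = count (p \o succn) (iota 0 m).
Proof. by move=> p0; rewrite /= p0 (iotaDl 1 0) count_map. Qed.

(** * Parent functions *)

Fixpoint last_open (a b : nat -> nat) (j : nat) : option nat :=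
  if j is y.+1 then if b y < a y then Some y else last_open a b y else None.

Section LastOpen.
Variables a b : nat -> nat.

Lemma last_open_some j y : last_open a b j = Some y ->
  [/\ y < j, b y < a y & forall z, y < z < j -> a z <= b z].
Proof.
elim: j => //= j IH; case: ifP => [bj [<-] | /negbT]; first by split=> // z; lia.
rewrite -leqNgt => abj /IH [yj bay closed]; split=> [||z]; [lia | by [] |].
move=> /andP [yz]; rewrite ltnS leq_eqVlt => /predU1P [-> //|zj].
by apply: closed; rewrite yz zj.
Qed.

Lemma last_open_none j : last_open a b j = None -> forall z, z < j -> a z <= b z.
Proof.
elim: j => //= j IH; case: ifP => // /negbT; rewrite -leqNgt => abj /IH closed z.
by rewrite ltnS leq_eqVlt => /predU1P [-> //|]; apply: closed.
Qed.

Lemma last_openE j y : y < j -> b y < a y -> (forall z, y < z < j -> a z <= b z) ->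
  last_open a b j = Some y.
Proof.
elim: j => // j IH; rewrite ltnS leq_eqVlt => /predU1P [-> /= -> //|yj] bay closed /=.
have := closed j; rewrite yj ltnSn leqNgt => /(_ isT) /negbTE ->.
by apply: IH => // z /andP [yz zj]; apply: closed; rewrite yz ltnS ltnW.
Qed.

End LastOpen.

Lemma eq_last_open a a' b b' j : (forall z, z < j -> a z = a' z) ->
  (forall z, z < j -> b z = b' z) -> last_open a b j = last_open a' b' j.
Proof.
elim: j => //= j IH ea eb; rewrite ea ?eb //.
by rewrite IH // => z zj; [apply: ea | apply: eb]; apply: ltnW.
Qed.

Section ParentFunctions.
Variable n : nat.
Implicit Types par : nat -> option nat.

Definition valid_parent par := forall j y, par j = Some y -> y < j <= n.

Definition noncrossing_parent par :=
  forall j k x y, par j = Some x -> par k = Some y -> x < y < j -> j < k -> False.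

Definition children_below par y j := count (fun k => par k == Some y) (iota 0 j).

Definition children par y := children_below par y n.+1.

Definition parent_step par i := if par i.+1 is Some _ then E else D.

Definition parent_path par := runs (children par) (parent_step par) (iota 0 n).

Lemma isN_parent_step par i : isN (parent_step par i) = false.
Proof. by rewrite /parent_step; case: (par _). Qed.

Lemma count_defined par (p : pred nat) m : par 0 = None ->
    (forall k, k < m -> (par k.+1 != None) = p k) ->
  count (fun k => par k != None) (iota 0 m.+1) = count p (iota 0 m).
Proof.
move=> par0 e; rewrite count_iota_shift ?par0 //.
by apply: eq_in_count => k; rewrite mem_iota => /andP [_ km]; apply: e.
Qed.

Lemma count_parent_step par m : par 0 = None ->
  count (isE \o parent_step par) (iota 0 m) = count (fun j => par j != None) (iota 0 m.+1).
Proof.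
move=> par0; rewrite (count_defined (p := isE \o parent_step par)) // => k _.
by rewrite /= /parent_step; case: (par k.+1).
Qed.

Lemma children_below_rcons par y j :
  children_below par y j.+1 = children_below par y j + (par j == Some y).
Proof. by rewrite /children_below iotaSr -cats1 count_cat /= addn0. Qed.

Lemma children_below_mono par y i j : i <= j -> children_below par y i <= children_below par y j.
Proof. exact: count_iota_leq. Qed.

Lemma sum_children_below par m j : \sum_(y < m) children_below par y j =
  count (fun k => if par k is Some y then y < m else false) (iota 0 j).
Proof.
elim: j => [|j IH]; first by rewrite big1.
under eq_bigr do rewrite children_below_rcons.
rewrite big_split IH iotaSr -cats1 count_cat /= addn0; congr (_ + _).
case: (par j) => [y|]; last by rewrite big1.
rewrite (eq_bigr (fun i : 'I_m => if i == y :> nat then 1 else 0)) => [|i _].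
  by rewrite -big_mkcond (big_ord1_eq _ (fun=> 1)); case: (y < m).
by rewrite (inj_eq Some_inj) eq_sym; case: (_ == _).
Qed.

Section Valid.
Variable par : nat -> option nat.
Hypothesis par_valid : valid_parent par.

Lemma valid_parent0 : par 0 = None.
Proof. by case e: (par 0) => [y|] //; have := par_valid e. Qed.

Lemma valid_parent_gt j : n < j -> par j = None.
Proof. by case e: (par j) => [y|] // nj; have := par_valid e; lia. Qed.

Lemma count_parented_le m : m < n ->
  count (isE \o parent_step par) (iota 0 m.+1) <= \sum_(y < m.+1) children par y.
Proof.
move=> mn; rewrite count_parent_step ?valid_parent0 // sum_children_below.
rewrite (@eq_in_count _ _ (fun k => if par k is Some y then y < m.+1 else false)).
  exact: count_iota_leq.
by move=> k; rewrite mem_iota; case e: (par k) => [y|] //= km; have := par_valid e; lia.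
Qed.

Lemma sum_children : \sum_(y < n) children par y = count (isE \o parent_step par) (iota 0 n).
Proof.
rewrite sum_children_below count_parent_step ?valid_parent0 //.
by apply: eq_in_count => k; case e: (par k) => [y|] //= _; have := par_valid e; lia.
Qed.

Lemma parent_path_schroder : schroder_path n (parent_path par).
Proof.
have stepNN := isN_parent_step par; split.
- by rewrite xcoordE !count_runs // count_isE_isD // size_iota.
- by rewrite ycoordE count_N_runs // count_runs // sum_children count_isE_isD // size_iota.
move=> k; rewrite xcoordE ycoordE leq_add2r.
by apply: (runs_above_diag stepNN) => m; apply: count_parented_le.
Qed.

End Valid.

(* A child of a vertex strictly between [x] and [j] lying after [j] would cross [x -> j]. *)
Lemma noncrossing_last_open par j x : valid_parent par -> noncrossing_parent par ->
  par j = Some x -> last_open (children par) (children_below par ^~ j) j = Some x.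
Proof.
move=> v c pj; have /andP [xj jn] := v _ _ pj.
apply: last_openE => // [|z /andP [xz zj]].
  have : children_below par x j.+1 <= children par x by apply: children_below_mono.
  by rewrite children_below_rcons pj eqxx addn1.
rewrite /children /children_below -(subnKC (leqW jn)) iotaD count_cat.
suff -> : count (fun k => par k == Some z) (iota (0 + j) (n.+1 - j)) = 0 by rewrite addn0.
apply/eqP; rewrite -leqn0 leqNgt -has_count; apply/hasP => -[k].
rewrite mem_iota add0n => /andP [jk _] /eqP pk.
move: jk; rewrite leq_eqVlt => /predU1P [jk|jk]; last by apply: (c j k x z pj pk); rewrite ?xz.
by move: pk; rewrite -jk pj => -[zx]; move: xz; rewrite zx ltnn.
Qed.

Lemma parent_path_inj par par' : valid_parent par -> valid_parent par' ->
    noncrossing_parent par -> noncrossing_parent par' ->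
  parent_path par = parent_path par' -> par =1 par'.
Proof.
move=> v v' c c' /(runs_inj (isN_parent_step par) (isN_parent_step par')) [ech est].
elim/ltn_ind => j IH; have [jn|nj] := leqP j n; last first.
  by rewrite (valid_parent_gt v nj) (valid_parent_gt v' nj).
case: j jn IH => [|i] jn IH; first by rewrite (valid_parent0 v) (valid_parent0 v').
have := est i; rewrite mem_iota /parent_step => /(_ jn).
case e: (par i.+1) => [x|]; case e': (par' i.+1) => [x'|] // _.
rewrite -(noncrossing_last_open v c e) -(noncrossing_last_open v' c' e').
apply: eq_last_open => z zi; first by apply: ech; rewrite mem_iota; lia.
by apply: eq_in_count => k; rewrite mem_iota => /andP [_ ki]; rewrite IH.
Qed.

Section Greedy.
Variables (a : nat -> nat) (x : nat -> step).

Definition greedy_choice j (l : seq (option nat)) :=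
  if (j <= n) && isE (x j.-1) then last_open a (fun y => count (pred1 (Some y)) l) j else None.

Fixpoint greedy_prefix j :=
  if j is i.+1 then rcons (greedy_prefix i) (greedy_choice i (greedy_prefix i)) else [::].

Definition greedy_parent j := greedy_choice j (greedy_prefix j).

Lemma greedy_prefixE j : greedy_prefix j = map greedy_parent (iota 0 j).
Proof. by elim: j => // j IH; rewrite iotaSr map_rcons -IH. Qed.

Lemma greedy_parentE j : greedy_parent j =
  if (j <= n) && isE (x j.-1) then last_open a (children_below greedy_parent ^~ j) j else None.
Proof.
rewrite /greedy_parent /greedy_choice greedy_prefixE; case: ifP => // _.
by apply: eq_last_open => // z _; rewrite count_map.
Qed.

Lemma greedy_parent_some j y : greedy_parent j = Some y ->
  [/\ j <= n, y < j, children_below greedy_parent y j < a y &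
      forall z, y < z < j -> a z <= children_below greedy_parent z j].
Proof. by rewrite greedy_parentE; case: ifP => // /andP [jn _] /last_open_some []. Qed.

Lemma greedy_parent_valid : valid_parent greedy_parent.
Proof. by move=> j y /greedy_parent_some [jn yj _ _]; rewrite yj jn. Qed.

Lemma greedy_noncrossing : noncrossing_parent greedy_parent.
Proof.
move=> j k x0 y /greedy_parent_some [_ _ _ closed] /greedy_parent_some [_ _ open _] xyj jk.
by have := closed y xyj; have := children_below_mono greedy_parent y (ltnW jk); lia.
Qed.

Lemma greedy_children_below_le y j : children_below greedy_parent y j <= a y.
Proof.
elim: j => // j IH; rewrite children_below_rcons.
by case: eqP => [/greedy_parent_some [_ _ lt _] | _]; rewrite ?addn1 ?addn0.
Qed.

Hypothesis ballot : forall m, m <= n -> count (isE \o x) (iota 0 m) <= \sum_(i < m) a i.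

(* If no vertex were open at an E step, the children assigned so far would use up all the
   N steps read, against the ballot condition. *)
Lemma greedy_parent_defined j : 0 < j <= n -> (greedy_parent j != None) = isE (x j.-1).
Proof.
elim/ltn_ind: j => -[//|i] IH /andP [_ iN].
rewrite greedy_parentE iN -[i.+1.-1]/i; case xiE: (isE (x i)) => //.
case e: (last_open _ _ i.+1) => [//|]; have closed := last_open_none e; exfalso.
have past : count (fun k => greedy_parent k != None) (iota 0 i.+1) = count (isE \o x) (iota 0 i).
  apply: count_defined => [|k ki]; first exact: valid_parent0 greedy_parent_valid.
  by apply: IH; rewrite ?ltnS // (ltn_trans ki).
have := ballot iN; rewrite iotaSr -cats1 count_cat /= xiE addn1 -past.
have : \sum_(y < i.+1) a y <= \sum_(y < i.+1) children_below greedy_parent y i.+1.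
  by apply: leq_sum => y _; apply: closed.
have : count (fun k => if greedy_parent k is Some y then y < i.+1 else false) (iota 0 i.+1)
    <= count (fun k => greedy_parent k != None) (iota 0 i.+1).
  by apply: sub_count => k; case: greedy_parent.
rewrite sum_children_below => le_def le_sum.
by rewrite ltnNge (leq_trans le_sum le_def).
Qed.

Hypothesis total : \sum_(i < n) a i <= count (isE \o x) (iota 0 n).

(* Every [y] gets at most [a y] children, and the totals agree. *)
Lemma greedy_children y : y < n -> children greedy_parent y = a y.
Proof.
have le_sum := @leqif_sum 'I_n xpredT _ _ _
  (fun i _ => leqif_eq (greedy_children_below_le i n.+1)).
suff /forall_inP eq_all : [forall (i : 'I_n | true), children greedy_parent i == a i].
  by move=> yn; apply/eqP; apply: (eq_all (Ordinal yn)).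
rewrite -le_sum.2 eqn_leq le_sum.1 (leq_trans total) //.
have gp0 := valid_parent0 greedy_parent_valid.
rewrite sum_children; last exact: greedy_parent_valid.
rewrite count_parent_step // (count_defined (p := isE \o x)) // => k kn.
exact: greedy_parent_defined.
Qed.

Hypothesis xNN : forall i, isN (x i) = false.

Lemma greedy_parent_path : parent_path greedy_parent = runs a x (iota 0 n).
Proof.
apply: eq_in_runs => i; rewrite mem_iota => /andP [_ iN]; first exact: greedy_children.
have := @greedy_parent_defined i.+1 iN; rewrite /parent_step.
by move: (xNN i); case: (x i); case: greedy_parent.
Qed.

End Greedy.

Lemma parent_path_surj p : schroder_path n p ->
  exists par, [/\ valid_parent par, noncrossing_parent par & parent_path par = p].
Proof.
case/schroder_runs=> a [x [xNN -> ballot total]].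
exists (greedy_parent a x); split; [exact: greedy_parent_valid | exact: greedy_noncrossing |].
exact: greedy_parent_path.
Qed.

End ParentFunctions.

(** * Linked partitions and parent functions *)

Lemma card_ord_count m (p : pred nat) : #|[set j : 'I_m | p j]| = count p (iota 0 m).
Proof. by rewrite cardsE -sum1_card -(big_mkord p (fun=> 1)) sum1_count /index_iota subn0. Qed.

Section Minimum.
Variable m : nat.
Implicit Types (i j : 'I_m) (B : {set 'I_m}).

Lemma is_minP i B : reflect (i \in B /\ forall j, j \in B -> i <= j) (is_min i B).
Proof. by apply: (iffP andP) => -[iB /forall_inP]; split. Qed.

Lemma is_min_uniq B i j : is_min i B -> is_min j B -> i = j.
Proof.
move=> /is_minP [iB imin] /is_minP [jB jmin]; apply: val_inj; apply/eqP.
by rewrite eqn_leq imin ?jmin.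
Qed.

Lemma exists_min B : B != set0 -> exists i, is_min i B.
Proof.
case/set0Pn => i0 i0B; exists [arg min_(i < i0 | i \in B) val i].
by case: arg_minnP => // i iB imin; apply/is_minP.
Qed.

End Minimum.

Section BlocksOfParent.
Variables (n : nat) (par : nat -> option nat).
Implicit Types (i j : 'I_n.+1) (B : {set 'I_n.+1}).

Definition block_of i : {set 'I_n.+1} := i |: [set j : 'I_n.+1 | par j == Some (val i)].

Definition heads : {set 'I_n.+1} :=
  [set i : 'I_n.+1 | (par i == None) || [exists j : 'I_n.+1, par j == Some (val i)]].

Definition blocks_of_parent := block_of @: heads.

Lemma mem_block_of i j : (j \in block_of i) = (j == i) || (par j == Some (val i)).
Proof. by rewrite !inE. Qed.

Lemma head_of_child i j : par j = Some (val i) -> i \in heads.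
Proof. by move=> pj; rewrite inE; apply/orP; right; apply/existsP; exists j; rewrite pj. Qed.

Hypothesis par_valid : valid_parent n par.

Lemma child_gt i j : par j = Some (val i) -> i < j.
Proof. by move=> /par_valid /andP []. Qed.

Lemma block_of_min i : is_min i (block_of i).
Proof.
apply/is_minP; split=> [|j]; first by rewrite mem_block_of eqxx.
by rewrite mem_block_of => /predU1P [-> // | /eqP /child_gt /ltnW].
Qed.

Lemma block_of_inj : injective block_of.
Proof. by move=> i j e; apply: (is_min_uniq (block_of_min i)); rewrite e block_of_min. Qed.

Lemma card_block_of i : #|block_of i| = (children n par i).+1.
Proof.
have : par i != Some (val i) by apply/eqP => /child_gt; rewrite ltnn.
rewrite cardsU1 inE => /negbTE ->.
by rewrite add1n (card_ord_count n.+1 (fun k : nat => par k == Some (val i))).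
Qed.

Lemma head_nearly_disjoint i j : i \in heads -> par i = Some (val j) ->
  is_min i (block_of i) && (1 < #|block_of i|) && ~~ is_min i (block_of j).
Proof.
move=> ih pi; rewrite block_of_min /=; apply/andP; split.
  move: ih; rewrite inE pi /= => /existsP [k /eqP pk].
  apply/card_gt1P; exists i, k; rewrite !mem_block_of eqxx pk eqxx orbT; split=> //.
  by apply/eqP => ik; move: (child_gt pk); rewrite ik ltnn.
apply/negP => /is_minP [_ imin]; have := imin j; rewrite mem_block_of eqxx => /(_ isT).
by rewrite leqNgt (child_gt pi).
Qed.

Lemma blocks_linked : linked_partition blocks_of_parent.
Proof.
split; [|split].
- by move=> B /imsetP [i _ ->]; apply/set0Pn; exists i; rewrite mem_block_of eqxx.
- move=> j; case pj: (par j) => [y|].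
    have yn : y < n.+1 by have := par_valid pj; lia.
    exists (block_of (Ordinal yn)); last by rewrite mem_block_of pj eqxx orbT.
    by apply: imset_f; apply: (head_of_child (j := j)).
  by exists (block_of j); [apply: imset_f; rewrite inE pj | rewrite mem_block_of eqxx].
move=> _ _ /imsetP [i ih ->] /imsetP [j jh ->] ne k.
rewrite !mem_block_of => /predU1P [-> | /eqP pk] /predU1P [ej | /eqP pk'].
- by move: ne; rewrite ej eqxx.
- by rewrite head_nearly_disjoint.
- by rewrite ej in pk *; rewrite head_nearly_disjoint ?orbT.
- by move: ne; rewrite pk in pk'; case: pk' => /val_inj ->; rewrite eqxx.
Qed.

Lemma blocks_noncrossing : noncrossing_parent par -> noncrossing blocks_of_parent.
Proof.
move=> nc [_ [_ [a [b [c [d [/imsetP [i _ ->] /imsetP [j _ ->] ne]]]]]]].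
case=> aB cB bB dB [ab bc cd].
have ia : i <= a by case/is_minP: (block_of_min i) => _ /(_ a aB).
have jb : j <= b by case/is_minP: (block_of_min j) => _ /(_ b bB).
have child k l : k \in block_of l -> l < k -> par k = Some (val l).
  by rewrite mem_block_of => /predU1P [-> | /eqP //]; rewrite ltnn.
have pc : par c = Some (val i) by apply: child => //; lia.
have pd : par d = Some (val j) by apply: child => //; lia.
case: (ltngtP i j) => [ij | ji | /val_inj ij]; last by move: ne; rewrite ij eqxx.
  by apply: (nc c d i j) => //; lia.
by apply: (nc b c j i) => //; [apply: child => //; lia | lia].
Qed.

Lemma minimal_elt_blocks j : minimal_elt blocks_of_parent j = (j \in heads).
Proof.
apply/existsP/idP => [[B /andP [/imsetP [i ih ->] jmin]] | jh].
  by rewrite (is_min_uniq jmin (block_of_min i)).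
by exists (block_of j); rewrite imset_f ?block_of_min.
Qed.

Lemma scm_blocks j : singly_covered_minimal blocks_of_parent j = (par j == None).
Proof.
rewrite /singly_covered_minimal minimal_elt_blocks /singly_covered /cover_count.
case pj: (par j) => [y|] /=.
  apply/negbTE/andP => -[jh /eqP c1].
  have yn : y < n.+1 by have := par_valid pj; lia.
  have : #|[set block_of j; block_of (Ordinal yn)]| <=
         #|[set B in blocks_of_parent | j \in B]|.
    apply/subset_leq_card/subsetP => B; rewrite !inE => /orP [] /eqP ->.
      by rewrite imset_f // mem_block_of eqxx.
    by rewrite imset_f ?(head_of_child (j := j)) // mem_block_of pj eqxx orbT.
  rewrite cards2 c1 ltnS leqn0 eqb0 negbK (inj_eq block_of_inj) => /eqP jy.
  by move: (child_gt (i := Ordinal yn) pj); rewrite -jy ltnn.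
rewrite inE pj /=.
have -> : [set B in blocks_of_parent | j \in B] = [set block_of j].
  apply/setP => B; rewrite !inE; apply/andP/eqP => [[/imsetP [i _ ->]] | ->].
    by rewrite mem_block_of pj orbF => /eqP ->.
  by split; [rewrite imset_f // inE pj | rewrite !inE eqxx].
by rewrite cards1.
Qed.

Lemma phi_blocks : phi blocks_of_parent = parent_path n par.
Proof.
apply: eq_in_runs => i; rewrite mem_iota => /andP [_ iN].
  rewrite /block_with_min; case: pickP => [B | none].
    case/andP=> /imsetP [k _ ->] /existsP [io /andP [/eqP <- imin]].
    by rewrite (is_min_uniq imin (block_of_min k)) card_block_of subn1.
  apply/esym/eqP; rewrite -leqn0 leqNgt -has_count; apply/hasP => -[j].
  rewrite mem_iota => /andP [_ jn] /eqP pj; have iN' : i < n.+1 by lia.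
  have := none (block_of (Ordinal iN')).
  rewrite imset_f /=; last exact: (head_of_child (j := Ordinal jn)).
  move/negbT/negP; apply; apply/existsP; exists (Ordinal iN').
  by rewrite eqxx block_of_min.
have -> : scm_val blocks_of_parent i.+1 = (par i.+1 == None).
  apply/existsP/idP => [[io /andP [/eqP <-]] | pN]; first by rewrite scm_blocks.
  by exists (Ordinal (iN : i.+1 < n.+1)); rewrite eqxx scm_blocks.
by rewrite /parent_step; case: (par i.+1).
Qed.

End BlocksOfParent.

Lemma eq_blocks_of_parent n par par' :
  par =1 par' -> blocks_of_parent n par = blocks_of_parent n par'.
Proof.
move=> e; have eh : heads n par = heads n par'.
  by apply/setP => i; rewrite !inE e; under eq_existsb do rewrite e.
by rewrite /blocks_of_parent eh; apply: eq_imset => i; apply/setP => j; rewrite !inE e.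
Qed.

Section ParentOfPartition.
Variables (n : nat) (P : {set {set 'I_n.+1}}).
Implicit Types (i j : 'I_n.+1) (B : {set 'I_n.+1}).

Definition nonmin_in j i := [exists B in P, [&& j \in B, is_min i B & i != j]].

Definition parent_of (k : nat) : option nat :=
  if insub k : option 'I_n.+1 is Some j then omap val [pick i | nonmin_in j i] else None.

Lemma parent_of_ord j : parent_of j = omap val [pick i | nonmin_in j i].
Proof. by rewrite /parent_of valK. Qed.

Lemma nonmin_in_lt j i : nonmin_in j i -> i < j.
Proof.
case/existsP=> B /and4P [_ jB /is_minP [_ imin] ij].
by rewrite ltn_neqAle imin // andbT; apply: contra ij => /eqP /val_inj ->.
Qed.

Lemma parent_of_valid : valid_parent n parent_of.
Proof.
move=> k y; rewrite /parent_of; case: insubP => // j _ <-.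
by case: pickP => // i /nonmin_in_lt ij /= [<-]; rewrite ij -ltnS ltn_ord.
Qed.

Lemma parent_of_some k y : parent_of k = Some y ->
  exists j i, [/\ val j = k, val i = y & nonmin_in j i].
Proof.
rewrite /parent_of; case: insubP => // j _ <-.
by case: pickP => // i ji [<-]; exists j, i.
Qed.

Hypothesis P_linked : linked_partition P.

Lemma min_block_uniq B B' i : B \in P -> B' \in P -> is_min i B -> is_min i B' -> B = B'.
Proof.
move=> BP B'P imin imin'; apply/eqP; apply: contraT => ne.
have /is_minP [iB _] := imin; have /is_minP [iB' _] := imin'.
by have := P_linked.2.2 B B' BP B'P ne i iB iB'; rewrite imin imin' !andbF.
Qed.

Lemma nonmin_in_uniq j i i' : nonmin_in j i -> nonmin_in j i' -> i = i'.
Proof.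
case/existsP=> B /and4P [BP jB imin ij]; case/existsP=> B' /and4P [B'P jB' imin' i'j].
have [eB | ne] := eqVneq B B'; first by rewrite -eB in imin'; apply: is_min_uniq imin imin'.
case/orP: (P_linked.2.2 B B' BP B'P ne j jB jB') => /andP [/andP [jmin _] _].
  by move: ij; rewrite (is_min_uniq imin jmin) eqxx.
by move: i'j; rewrite (is_min_uniq imin' jmin) eqxx.
Qed.

Lemma parent_ofE j i : (parent_of j == Some (val i)) = nonmin_in j i.
Proof.
rewrite parent_of_ord; case: pickP => [i' ji' | none] /=; last by rewrite none.
apply/eqP/idP => [[/val_inj <-] // | ji]; by rewrite (nonmin_in_uniq ji' ji).
Qed.

Lemma block_of_parent_of B i : B \in P -> is_min i B -> B = block_of parent_of i.
Proof.
move=> BP imin; apply/setP => j; rewrite mem_block_of parent_ofE.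
apply/idP/idP => [jB | /predU1P [-> | /existsP [B' /and4P [B'P jB' imin' _]]]].
- have [// | ji] := eqVneq j i.
  by apply/existsP; exists B; rewrite BP jB imin eq_sym ji.
- by case/is_minP: imin.
- by rewrite (min_block_uniq BP B'P imin imin').
Qed.

Lemma parent_of_head B i : B \in P -> is_min i B -> i \in heads n parent_of.
Proof.
move=> BP imin; rewrite inE parent_of_ord.
case: pickP => //= k /existsP [B' /and4P [B'P iB' kmin ki]].
have ne : B != B'.
  by apply: contra ki => /eqP eB; rewrite -eB in kmin; rewrite (is_min_uniq kmin imin).
have /is_minP [iB _] := imin.
case/orP: (P_linked.2.2 B B' BP B'P ne i iB iB') => /andP [/andP [imin2 big] _]; last first.
  by move: ki; rewrite (is_min_uniq kmin imin2) eqxx.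
have : 0 < #|B :\ i| by move: big; rewrite (cardsD1 i) iB.
case/card_gt0P => j; rewrite !inE => /andP [ji jB].
by apply/existsP; exists j; rewrite parent_ofE; apply/existsP; exists B; rewrite BP jB imin eq_sym.
Qed.

Lemma block_of_head i : i \in heads n parent_of -> block_of parent_of i \in P.
Proof.
rewrite inE => /orP [/eqP pi | /existsP [j]]; last first.
  by rewrite parent_ofE => /existsP [B /and4P [BP _ imin _]]; rewrite -(block_of_parent_of BP imin).
have [B BP iB] := P_linked.2.1 i; have [k kmin] := exists_min (P_linked.1 B BP).
have [ki | ne] := eqVneq k i; first by rewrite -ki -(block_of_parent_of BP kmin).
have : nonmin_in i k by apply/existsP; exists B; rewrite BP iB kmin ne.
by rewrite -parent_ofE pi.
Qed.

Lemma blocks_parent_of : P = blocks_of_parent n parent_of.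
Proof.
apply/setP => B; apply/idP/imsetP => [BP | [i ih ->]]; last exact: block_of_head.
have [i imin] := exists_min (P_linked.1 B BP).
by exists i; [apply: parent_of_head imin | apply: block_of_parent_of].
Qed.

Lemma phi_parent_of : phi P = parent_path n parent_of.
Proof. by rewrite {1}blocks_parent_of phi_blocks //; apply: parent_of_valid. Qed.

Lemma parent_of_noncrossing : noncrossing P -> noncrossing_parent parent_of.
Proof.
move=> nc j k x y /parent_of_some [jo [xo [<- <- /existsP [B /and4P [BP jB xmin _]]]]].
move=> /parent_of_some [ko [yo [<- <- /existsP [B' /and4P [B'P kB' ymin _]]]]] /andP [xy yj] jk.
apply: nc; exists B, B', xo, yo, jo, ko; split=> //.
  by apply: contraTneq xy => eB; rewrite -eB in ymin; rewrite (is_min_uniq xmin ymin) ltnn.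
by split=> //; [case/is_minP: xmin | case/is_minP: ymin].
Qed.

End ParentOfPartition.

Theorem theorem2p4 (n : nat) :
  (forall P : {set {set 'I_n.+1}}, nc_linked_partition P -> schroder_path n (phi P)) /\
  (forall P Q : {set {set 'I_n.+1}}, nc_linked_partition P -> nc_linked_partition Q ->
      phi P = phi Q -> P = Q) /\
  (forall p : seq step, schroder_path n p ->
      exists P : {set {set 'I_n.+1}}, nc_linked_partition P /\ phi P = p).
Proof.
split; [|split].
- move=> P [linP _]; rewrite phi_parent_of //.
  exact/parent_path_schroder/parent_of_valid.
- move=> P Q [linP ncP] [linQ ncQ]; rewrite !phi_parent_of // => samepath.
  rewrite (blocks_parent_of linP) (blocks_parent_of linQ); apply: eq_blocks_of_parent.
  by apply: parent_path_inj samepath;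
    first [exact: parent_of_valid | exact: parent_of_noncrossing].
- move=> p /parent_path_surj [par [valid nc <-]].
  exists (blocks_of_parent n par); split; last exact: phi_blocks.
  by split; [apply: blocks_linked | apply: blocks_noncrossing].
Qed.
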